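(* Let $p\in(0,1]$ and let $f:\mathbb{Z}\to\mathbb{R}$ belong to $\ell^p(\mathbb{Z})$. Then $${\rm Var}_p Mf\leq \left(2\sum_{k=0}^{\infty}\frac{2^{p}}{(2k+1)^p(2k+3)^p}\right)^{1/p}\|f\|_{\ell^p(\mathbb{Z})}=:\mathbf{C}_p\|f\|_{\ell^p(\mathbb{Z})},$$ and the constant $\mathbf{C}_p$ is the best possible. Moreover, for $p\in(\frac12,1]$, a function $f\not\equiv 0$ attains equality if and only if $f$ is a delta function, i.e. $f=c\,\mathbf{1}_{\{m\}}$ for some $m\in\mathbb{Z}$ and $c\neq 0$.
   Context: For $f:\mathbb{Z}\to\mathbb{R}$, the centered discrete Hardy–Littlewood maximal function is $Mf(n)=\sup_{r\ge 0}\frac{1}{2r+1}\sum_{k=-r}^{r}|f(n+k)|$ ($r$ integer). $\|f\|_{\ell^p(\mathbb{Z})}=(\sum_{n\in\mathbb{Z}}|f(n)|^p)^{1/p}$ and ${\rm Var}_p g=\left(\sum_{n\in\mathbb{Z}}|g(n+1)-g(n)|^p\right)^{1/p}$. *)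

From Stdlib Require Import Reals ZArith.
From Coquelicot Require Import Coquelicot.
Open Scope R_scope.

(* x^q for x >= 0, q > 0, with the convention 0^q = 0 (Rpower 0 q would be 1). *)
Definition rpow (x q : R) : R := if Rlt_dec 0 x then Rpower x q else 0.

Definition Rbar_rpow (x : Rbar) (q : R) : Rbar :=
  match x with
  | Finite r => Finite (rpow r q)
  | p_infty => p_infty
  | m_infty => Finite 0
  end.

(* sum over Z of a nonnegative family, as a value in [0, +oo]:
   limit of the symmetric partial sums sum_{n=-N}^{N} a n (monotone). *)
Definition sumZ (a : Z -> R) : Rbar :=
  Lim_seq (fun N : nat =>
    sum_n (fun k : nat => a (Z.of_nat k - Z.of_nat N)%Z) (2 * N)%nat).

Definition sumN (a : nat -> R) : Rbar := Lim_seq (fun N => sum_n a N).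

Definition lp_sum (p : R) (f : Z -> R) : Rbar := sumZ (fun n => rpow (Rabs (f n)) p).

Definition in_lp (p : R) (f : Z -> R) : Prop := is_finite (lp_sum p f).

Definition lp_norm (p : R) (f : Z -> R) : Rbar := Rbar_rpow (lp_sum p f) (/ p).

Definition avg (f : Z -> R) (n : Z) (r : nat) : R :=
  / (2 * INR r + 1) *
  sum_n (fun k : nat => Rabs (f (n + (Z.of_nat k - Z.of_nat r))%Z)) (2 * r)%nat.

(* centered discrete maximal function; the sup (in Rbar) is finite for
   f in l^p, so we take its real part *)
Definition maxf (f : Z -> R) (n : Z) : R := real (Sup_seq (fun r => Finite (avg f n r))).

Definition Var_p (p : R) (g : Z -> R) : Rbar :=
  Rbar_rpow (sumZ (fun n => rpow (Rabs (g (n + 1)%Z - g n)) p)) (/ p).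

Definition Cp (p : R) : Rbar :=
  Rbar_rpow
    (Rbar_mult 2 (sumN (fun k : nat =>
        rpow 2 p / (rpow (2 * INR k + 1) p * rpow (2 * INR k + 3) p))))
    (/ p).

Definition is_delta (f : Z -> R) : Prop :=
  exists (m : Z) (c : R), c <> 0 /\ forall n : Z, f n = (if Z.eqb n m then c else 0).

(* The supremum defining Mf(n) is attained.  If Mf(n+1) >= Mf(n) and Mf(n+1) is the average of
   |f| over the ball of radius r around n+1, then Mf(n) is at least the average over the ball of
   radius r+1 around n, which contains it; so the jump is at most 1/(2r+1) - 1/(2r+3) times the
   mass of |f| in the ball.  As p <= 1, its p-th power is at most the sum of |f(m)|^p over the
   ball weighted by (1/(2r+1) - 1/(2r+3))^p, and this weight is at most a fixed kernel evaluated
   at the distance from m to {n, n+1}.  Summing over n, every |f(m)|^p receives the total mass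
   of the kernel, which is C_p^p.  For a delta function all these inequalities are equalities,
   which gives sharpness.  For p > 1/2 the kernel is summable and exceeds the truncated weight at
   all but one point, so a function with two nonzero values loses a positive amount
   at the jump between 0 and 1. *)

From Stdlib Require Import Reals ZArith Lra Lia Classical.
From Coquelicot Require Import Coquelicot.
Open Scope R_scope.

Lemma Rpower_gt_0 x q : 0 < Rpower x q.
Proof. apply exp_pos. Qed.

Lemma rpow_Rpower x q : 0 < x -> rpow x q = Rpower x q.
Proof. intros Hx; unfold rpow; destruct (Rlt_dec 0 x); [reflexivity | lra]. Qed.

Lemma rpow_nonpos x q : x <= 0 -> rpow x q = 0.
Proof. intros Hx; unfold rpow; destruct (Rlt_dec 0 x); [lra | reflexivity]. Qed.

Lemma rpow_ge_0 x q : 0 <= rpow x q.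
Proof. unfold rpow; destruct (Rlt_dec 0 x); [left; apply Rpower_gt_0 | lra]. Qed.

Lemma rpow_gt_0 x q : 0 < x -> 0 < rpow x q.
Proof. intros Hx; rewrite rpow_Rpower by exact Hx; apply Rpower_gt_0. Qed.

Lemma rpow_le_compat x y q : 0 < q -> 0 <= x <= y -> rpow x q <= rpow y q.
Proof.
  intros Hq [Hx Hxy]. destruct (Req_dec x 0) as [->|Hx0].
  - rewrite rpow_nonpos by lra. apply rpow_ge_0.
  - rewrite !rpow_Rpower by lra. apply Rle_Rpower_l; lra.
Qed.

Lemma rpow_lt_compat x y q : 0 < q -> 0 <= x < y -> rpow x q < rpow y q.
Proof.
  intros Hq [Hx Hxy]. destruct (Req_dec x 0) as [->|Hx0].
  - rewrite rpow_nonpos by lra. apply rpow_gt_0; lra.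
  - rewrite !rpow_Rpower by lra. apply Rlt_Rpower_l; lra.
Qed.

Lemma rpow_mult_distr x y q : 0 <= x -> 0 <= y -> rpow (x * y) q = rpow x q * rpow y q.
Proof.
  intros Hx Hy.
  destruct (Req_dec x 0) as [->|Hx0]; [rewrite Rmult_0_l, rpow_nonpos by lra; ring|].
  destruct (Req_dec y 0) as [->|Hy0]; [rewrite Rmult_0_r, rpow_nonpos by lra; ring|].
  rewrite !rpow_Rpower by (try apply Rmult_lt_0_compat; lra).
  symmetry; apply Rpower_mult_distr; lra.
Qed.

Lemma rpow_rpow x p q : 0 <= x -> rpow (rpow x p) q = rpow x (p * q).
Proof.
  intros Hx. destruct (Req_dec x 0) as [->|Hx0].
  - rewrite !(rpow_nonpos 0) by lra. reflexivity.
  - rewrite (rpow_Rpower x) by lra. rewrite !rpow_Rpower by (try apply Rpower_gt_0; lra).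
    apply Rpower_mult.
Qed.

Lemma rpow_rpow_inv x p : 0 < p -> 0 <= x -> rpow (rpow x p) (/ p) = x.
Proof.
  intros Hp Hx. rewrite rpow_rpow, Rinv_r by lra.
  destruct (Req_dec x 0) as [->|Hx0]; [apply rpow_nonpos; lra|].
  rewrite rpow_Rpower by lra. apply Rpower_1; lra.
Qed.

Lemma rpow_plus_le x y p : 0 < p <= 1 -> 0 <= x -> 0 <= y ->
  rpow (x + y) p <= rpow x p + rpow y p.
Proof.
  intros Hp Hx Hy.
  destruct (Req_dec x 0) as [->|Hx0]; [rewrite Rplus_0_l, (rpow_nonpos 0) by lra; lra|].
  destruct (Req_dec y 0) as [->|Hy0]; [rewrite Rplus_0_r, (rpow_nonpos 0) by lra; lra|].
  rewrite !rpow_Rpower by lra.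
  (* z^p = z * z^(p-1), and z |-> z^(p-1) is nonincreasing because p - 1 <= 0 *)
  assert (Hsplit : forall z, 0 < z -> Rpower z p = z * Rpower z (p - 1)).
  { intros z Hz. replace p with (1 + (p - 1)) at 1 by ring.
    rewrite Rpower_plus, Rpower_1 by exact Hz. reflexivity. }
  assert (Hanti : forall a, 0 < a <= x + y -> Rpower (x + y) (p - 1) <= Rpower a (p - 1)).
  { intros a Ha. replace (p - 1) with (- (1 - p)) by ring. rewrite !Rpower_Ropp.
    apply Rinv_le_contravar; [apply Rpower_gt_0 | apply Rle_Rpower_l; lra]. }
  rewrite !Hsplit by lra.
  pose proof (Hanti x ltac:(lra)). pose proof (Hanti y ltac:(lra)). nra.
Qed.

Lemma Rbar_mult_p_infty_pos (a : R) : 0 < a -> Rbar_mult a p_infty = p_infty.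
Proof.
  intros Ha. unfold Rbar_mult, Rbar_mult'.
  destruct (Rle_dec 0 a) as [H|H]; [|lra].
  destruct (Rle_lt_or_eq_dec 0 a H); [reflexivity | lra].
Qed.

Lemma Rbar_mult_1_r (x : Rbar) : Rbar_mult x 1 = x.
Proof.
  rewrite Rbar_mult_comm. destruct x as [a| |]; simpl; [f_equal; ring| |];
    unfold Rbar_mult, Rbar_mult'; destruct (Rle_dec 0 1) as [H|H]; try lra;
    destruct (Rle_lt_or_eq_dec 0 1 H); try reflexivity; lra.
Qed.

Lemma Rbar_rpow_le x y q : 0 < q -> Rbar_le 0 x -> Rbar_le x y ->
  Rbar_le (Rbar_rpow x q) (Rbar_rpow y q).
Proof.
  intros Hq Hx Hxy.
  destruct x as [a| |], y as [b| |]; simpl in *; try contradiction; trivial.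
  apply rpow_le_compat; lra.
Qed.

Lemma Rbar_rpow_mult x y q : 0 < q -> Rbar_le 0 x -> Rbar_le 0 y ->
  Rbar_rpow (Rbar_mult x y) q = Rbar_mult (Rbar_rpow x q) (Rbar_rpow y q).
Proof.
  intros Hq Hx Hy.
  (* 0 * (+oo) = 0 in Rbar_mult, and 0 ^ q = 0, so the boundary cases agree *)
  assert (Hinf : forall a, 0 <= a ->
    Rbar_rpow (Rbar_mult a p_infty) q = Rbar_mult (rpow a q) p_infty).
  { intros a Ha. destruct (Req_dec a 0) as [->|Ha0].
    - rewrite rpow_nonpos, !Rbar_mult_0_l by lra. simpl. rewrite rpow_nonpos by lra. reflexivity.
    - rewrite !Rbar_mult_p_infty_pos by (try apply rpow_gt_0; lra). reflexivity. }
  destruct x as [a| |], y as [b| |]; simpl in Hx, Hy; try contradiction.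
  - simpl. f_equal. apply rpow_mult_distr; assumption.
  - apply Hinf; assumption.
  - rewrite Rbar_mult_comm, (Rbar_mult_comm _ (Rbar_rpow _ q)). apply Hinf; assumption.
  - reflexivity.
Qed.

Lemma Rbar_rpow_lt x y q : 0 < q -> Rbar_le 0 x -> Rbar_lt x y ->
  Rbar_lt (Rbar_rpow x q) (Rbar_rpow y q).
Proof.
  intros Hq Hx Hxy.
  destruct x as [a| |], y as [b| |]; simpl in *; try contradiction; trivial.
  apply rpow_lt_compat; lra.
Qed.

Lemma Lim_seq_incr_ge (u : nat -> R) n : (forall k, u k <= u (S k)) ->
  Rbar_le (u n) (Lim_seq u).
Proof.
  intros Hu. rewrite <- (Lim_seq_const (u n)). apply Lim_seq_le_loc.
  exists n. intros k Hk. induction Hk as [|k Hk IH]; [lra | specialize (Hu k); lra].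
Qed.

Lemma Lim_seq_le_ub (u : nat -> R) (l : Rbar) : (forall n, Rbar_le (u n) l) ->
  Rbar_le (Lim_seq u) l.
Proof.
  intros Hu. destruct l as [b| |].
  - rewrite <- (Lim_seq_const b). apply Lim_seq_le_loc. exists O. intros n _. apply Hu.
  - destruct (Lim_seq u); simpl; trivial.
  - destruct (Hu O).
Qed.

Fixpoint isum (h : Z -> R) (lo : Z) (n : nat) : R :=
  match n with
  | O => 0
  | S n => isum h lo n + h (lo + Z.of_nat n)%Z
  end.

Definition ball_sum (h : Z -> R) (c : Z) (r : nat) : R := isum h (c - Z.of_nat r) (2 * r + 1).

Lemma isum_ext_in h1 h2 lo n :
  (forall k, (k < n)%nat -> h1 (lo + Z.of_nat k)%Z = h2 (lo + Z.of_nat k)%Z) ->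
  isum h1 lo n = isum h2 lo n.
Proof. induction n as [|n IH]; simpl; intros H; [reflexivity|]. rewrite IH, H; auto. Qed.

Lemma isum_ext h1 h2 lo n : (forall z, h1 z = h2 z) -> isum h1 lo n = isum h2 lo n.
Proof. intros H; apply isum_ext_in; auto. Qed.

Lemma isum_le h1 h2 lo n :
  (forall k, (k < n)%nat -> h1 (lo + Z.of_nat k)%Z <= h2 (lo + Z.of_nat k)%Z) ->
  isum h1 lo n <= isum h2 lo n.
Proof.
  induction n as [|n IH]; simpl; intros H; [lra|].
  pose proof (H n ltac:(lia)). pose proof (IH ltac:(auto)). lra.
Qed.

Lemma isum_lt h1 h2 lo n :
  (forall k, (k < n)%nat -> h1 (lo + Z.of_nat k)%Z <= h2 (lo + Z.of_nat k)%Z) ->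
  (exists k, (k < n)%nat /\ h1 (lo + Z.of_nat k)%Z < h2 (lo + Z.of_nat k)%Z) ->
  isum h1 lo n < isum h2 lo n.
Proof.
  induction n as [|n IH]; simpl; intros H [k [Hk Hlt]]; [lia|].
  pose proof (H n ltac:(lia)).
  destruct (Nat.eq_dec k n) as [->|Hkn].
  - pose proof (isum_le h1 h2 lo n ltac:(auto)). lra.
  - assert (isum h1 lo n < isum h2 lo n) by (apply IH; eauto; exists k; split; [lia | exact Hlt]).
    lra.
Qed.

Lemma isum_ge_0 h lo n : (forall z, 0 <= h z) -> 0 <= isum h lo n.
Proof.
  intros H. induction n as [|n IH]; simpl; [lra | pose proof (H (lo + Z.of_nat n)%Z); lra].
Qed.

Lemma isum_plus h1 h2 lo n : isum (fun z => h1 z + h2 z) lo n = isum h1 lo n + isum h2 lo n.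
Proof. induction n as [|n IH]; simpl; [lra | rewrite IH; ring]. Qed.

Lemma isum_scal a h lo n : isum (fun z => a * h z) lo n = a * isum h lo n.
Proof. induction n as [|n IH]; simpl; [lra | rewrite IH; ring]. Qed.

Lemma isum_split h lo n1 n2 : isum h lo (n1 + n2) = isum h lo n1 + isum h (lo + Z.of_nat n1)%Z n2.
Proof.
  induction n2 as [|n2 IH]; simpl; [rewrite Nat.add_0_r; lra|].
  rewrite Nat.add_succ_r; simpl. rewrite IH, Nat2Z.inj_add, Z.add_assoc. ring.
Qed.

Lemma isum_zero_in h lo n : (forall k, (k < n)%nat -> h (lo + Z.of_nat k)%Z = 0) -> isum h lo n = 0.
Proof. induction n as [|n IH]; simpl; intros H; [reflexivity|]. rewrite IH, H; auto; lra. Qed.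

Lemma isum_le_superset h lo n lo' n' : (forall z, 0 <= h z) ->
  (lo' <= lo)%Z -> (lo + Z.of_nat n <= lo' + Z.of_nat n')%Z -> isum h lo n <= isum h lo' n'.
Proof.
  intros H H1 H2. set (d := Z.to_nat (lo - lo')).
  replace n' with (d + (n + (n' - d - n)))%nat by lia.
  rewrite !isum_split. replace (lo' + Z.of_nat d)%Z with lo by lia.
  pose proof (isum_ge_0 h lo' d H). pose proof (isum_ge_0 h (lo + Z.of_nat n) (n' - d - n) H).
  lra.
Qed.

Lemma isum_shift h lo n s : isum h lo n = isum (fun z => h (z + s)%Z) (lo - s)%Z n.
Proof. induction n as [|n IH]; simpl; [reflexivity|]. rewrite IH. do 2 f_equal. lia. Qed.

Lemma isum_reflect h c lo n :
  isum (fun z => h (c - z)%Z) lo n = isum h (c - lo - Z.of_nat n + 1)%Z n.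
Proof.
  revert lo. induction n as [|n IH]; intros lo; [reflexivity|].
  simpl (isum _ lo (S n)). rewrite IH.
  replace (S n) with (1 + n)%nat by lia. rewrite isum_split. simpl (isum h _ 1).
  rewrite Rplus_0_l, Rplus_comm. f_equal; f_equal; lia.
Qed.

Lemma isum_swap (F : Z -> Z -> R) lo1 n1 lo2 n2 :
  isum (fun a => isum (fun b => F a b) lo2 n2) lo1 n1 =
  isum (fun b => isum (fun a => F a b) lo1 n1) lo2 n2.
Proof.
  induction n1 as [|n1 IH]; simpl.
  - symmetry. apply isum_zero_in. reflexivity.
  - rewrite IH, <- isum_plus. reflexivity.
Qed.

Lemma isum_single h lo n m : (forall z, z <> m -> h z = 0) ->
  (lo <= m < lo + Z.of_nat n)%Z -> isum h lo n = h m.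
Proof.
  intros H Hm. set (d := Z.to_nat (m - lo)).
  replace n with (d + (1 + (n - d - 1)))%nat by lia. rewrite !isum_split.
  rewrite (isum_zero_in h lo d), (isum_zero_in h (lo + Z.of_nat d + Z.of_nat 1)%Z)
    by (intros k Hk; apply H; lia).
  simpl. replace (lo + Z.of_nat d + 0)%Z with m by lia. ring.
Qed.

Lemma sum_n_isum (F : Z -> R) lo n : sum_n (fun k => F (Z.of_nat k + lo)%Z) n = isum F lo (S n).
Proof.
  induction n as [|n IH].
  - rewrite sum_O. simpl. rewrite Z.add_0_r. ring.
  - rewrite sum_Sn, IH. replace (Z.of_nat (S n) + lo)%Z with (lo + Z.of_nat (S n))%Z by lia.
    reflexivity.
Qed.

Lemma isum_rpow_le h lo n p : 0 < p <= 1 -> (forall z, 0 <= h z) ->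
  rpow (isum h lo n) p <= isum (fun z => rpow (h z) p) lo n.
Proof.
  intros Hp H. induction n as [|n IH]; simpl; [rewrite rpow_nonpos; lra|].
  eapply Rle_trans; [apply rpow_plus_le; auto; apply isum_ge_0; exact H | lra].
Qed.

Lemma sumZ_ball_sum h : sumZ h = Lim_seq (ball_sum h 0).
Proof.
  unfold sumZ. apply Lim_seq_ext. intros N. unfold ball_sum.
  replace (2 * N + 1)%nat with (S (2 * N)) by lia.
  rewrite <- sum_n_isum. apply sum_n_ext. intros k. f_equal; lia.
Qed.

Lemma ball_sum_incr h N : (forall z, 0 <= h z) -> ball_sum h 0 N <= ball_sum h 0 (S N).
Proof. intros H. apply isum_le_superset; [exact H | lia | lia]. Qed.

Lemma sumZ_ge_0 h : (forall z, 0 <= h z) -> Rbar_le 0 (sumZ h).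
Proof.
  intros H. rewrite sumZ_ball_sum.
  apply Rbar_le_trans with (ball_sum h 0 O); [apply isum_ge_0, H|].
  apply Lim_seq_incr_ge. intros N. apply ball_sum_incr, H.
Qed.

Lemma isum_le_sumZ h S lo n : (forall z, 0 <= h z) -> sumZ h = Finite S -> isum h lo n <= S.
Proof.
  intros H HS. set (N := (Z.to_nat (Z.abs lo) + n)%nat).
  apply Rle_trans with (ball_sum h 0 N); [apply isum_le_superset; [exact H | lia | lia]|].
  assert (HN := Lim_seq_incr_ge (ball_sum h 0) N (fun k => ball_sum_incr h k H)).
  rewrite <- sumZ_ball_sum, HS in HN. exact HN.
Qed.

Lemma le_sumZ h S m : (forall z, 0 <= h z) -> sumZ h = Finite S -> h m <= S.
Proof.
  intros H HS. replace (h m) with (isum h m 1) by (simpl; rewrite Z.add_0_r; ring).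
  apply isum_le_sumZ; assumption.
Qed.

Lemma sumZ_ext h1 h2 : (forall n, h1 n = h2 n) -> sumZ h1 = sumZ h2.
Proof. intros H. unfold sumZ. apply Lim_seq_ext. intros N. apply sum_n_ext. intros k. apply H. Qed.

Lemma sumZ_scal a h : sumZ (fun n => a * h n) = Rbar_mult a (sumZ h).
Proof.
  rewrite !sumZ_ball_sum, <- Lim_seq_scal_l. apply Lim_seq_ext. intros N.
  unfold ball_sum. apply isum_scal.
Qed.

(** * Attainment of the maximal function *)

Definition abs_rpow (p : R) (f : Z -> R) (z : Z) : R := rpow (Rabs (f z)) p.

Lemma in_lp_sumZ p f : in_lp p f -> sumZ (abs_rpow p f) = Finite (real (lp_sum p f)).
Proof. intros Hf. symmetry. exact Hf. Qed.

Definition avg_sup_attained (f : Z -> R) : Prop :=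
  forall n, exists r0, forall r, avg f n r <= avg f n r0.

Lemma avg_ball_sum f n r : avg f n r = / (2 * INR r + 1) * ball_sum (fun z => Rabs (f z)) n r.
Proof.
  unfold avg, ball_sum. f_equal. replace (2 * r + 1)%nat with (S (2 * r)) by lia.
  rewrite <- sum_n_isum. apply sum_n_ext. intros k. do 2 f_equal. lia.
Qed.

Lemma avg_ge_0 f n r : 0 <= avg f n r.
Proof.
  rewrite avg_ball_sum. pose proof (pos_INR r). apply Rmult_le_pos.
  - left; apply Rinv_0_lt_compat; lra.
  - apply isum_ge_0. intros; apply Rabs_pos.
Qed.

Lemma maxf_eq_avg f n r0 : (forall r, avg f n r <= avg f n r0) -> maxf f n = avg f n r0.
Proof.
  intros H. unfold maxf. rewrite (is_sup_seq_unique _ (Finite (avg f n r0))); [reflexivity|].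
  intros eps. split.
  - intros k. specialize (H k). simpl. destruct eps; simpl; lra.
  - exists r0. simpl. destruct eps; simpl; lra.
Qed.

Lemma avg_le_maxf f n r : avg_sup_attained f -> avg f n r <= maxf f n.
Proof. intros Ha. destruct (Ha n) as [r0 H]. rewrite (maxf_eq_avg f n r0 H). apply H. Qed.

Lemma finite_argmax (u : nat -> R) N :
  exists r0, (r0 <= N)%nat /\ forall r, (r <= N)%nat -> u r <= u r0.
Proof.
  induction N as [|N [r0 [Hr0 Hmax]]].
  - exists O. split; [lia|]. intros r Hr. replace r with O by lia. lra.
  - destruct (Rle_dec (u (S N)) (u r0)) as [Hle|Hlt].
    + exists r0. split; [lia|]. intros r Hr.
      destruct (Nat.eq_dec r (S N)) as [->|]; [assumption | apply Hmax; lia].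
    + exists (S N). split; [lia|]. intros r Hr.
      destruct (Nat.eq_dec r (S N)) as [->|]; [lra | pose proof (Hmax r ltac:(lia)); lra].
Qed.

Lemma avg_sup_attained_at f n B : (forall r, ball_sum (fun z => Rabs (f z)) n r <= B) ->
  exists r0, forall r, avg f n r <= avg f n r0.
Proof.
  intros HB. destruct (classic (exists r1, 0 < avg f n r1)) as [[r1 Hr1]|Hnone].
  2: { exists O. intros r. apply Rnot_lt_le. intros Hr. apply Hnone. exists r.
       pose proof (avg_ge_0 f n O). lra. }
  (* the averages are at most B / (2r+1), hence below avg f n r1 for all large r *)
  destruct (INR_archimed (avg f n r1) B) as [N HN]; [lra|].
  assert (Hlarge : forall r, (N <= r)%nat -> avg f n r < avg f n r1).
  { intros r Hr. rewrite (avg_ball_sum f n r). apply le_INR in Hr. pose proof (HB r).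
    assert (0 < 2 * INR r + 1) by (pose proof (pos_INR r); lra).
    apply Rmult_lt_reg_l with (2 * INR r + 1); [assumption|].
    rewrite <- Rmult_assoc, Rinv_r, Rmult_1_l by lra. nra. }
  destruct (finite_argmax (avg f n) N) as [r0 [_ Hmax]].
  exists r0. intros r. destruct (le_lt_dec r N) as [HrN|HrN]; [apply Hmax; exact HrN|].
  assert (Hr1N : (r1 <= N)%nat).
  { destruct (le_lt_dec r1 N); [assumption|]. pose proof (Hlarge r1 ltac:(lia)). lra. }
  pose proof (Hmax r1 Hr1N). pose proof (Hlarge r ltac:(lia)). lra.
Qed.

Lemma abs_le_abs_rpow p f S z : 0 < p <= 1 -> sumZ (abs_rpow p f) = Finite S ->
  Rabs (f z) <= abs_rpow p f z * Rpower (Rmax 1 S) (/ p - 1).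
Proof.
  intros Hp HS. destruct (Req_dec (f z) 0) as [Hz|Hz].
  { rewrite Hz, Rabs_R0. apply Rmult_le_pos; [apply rpow_ge_0 | left; apply Rpower_gt_0]. }
  assert (Ha : 0 < Rabs (f z)) by (apply Rabs_pos_lt; exact Hz).
  assert (Hw : 0 < abs_rpow p f z) by (apply rpow_gt_0; exact Ha).
  assert (HwS : abs_rpow p f z <= S) by (apply le_sumZ; [intros; apply rpow_ge_0 | exact HS]).
  assert (Hinv : 1 <= / p) by (rewrite <- Rinv_1; apply Rinv_le_contravar; lra).
  (* |f z| = w^(1/p) = w * w^(1/p - 1) where w = |f z|^p <= S *)
  rewrite <- (rpow_rpow_inv (Rabs (f z)) p) at 1 by lra. fold (abs_rpow p f z).
  rewrite rpow_Rpower by exact Hw. replace (/ p) with (1 + (/ p - 1)) at 1 by ring.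
  rewrite Rpower_plus, Rpower_1 by exact Hw. apply Rmult_le_compat_l; [lra|].
  apply Rle_Rpower_l; [lra|]. pose proof (Rmax_r 1 S). lra.
Qed.

Lemma in_lp_avg_sup_attained p f : 0 < p <= 1 -> in_lp p f -> avg_sup_attained f.
Proof.
  intros Hp Hf n. set (S := real (lp_sum p f)). set (a := Rpower (Rmax 1 S) (/ p - 1)).
  pose proof (in_lp_sumZ p f Hf) as HS.
  apply (avg_sup_attained_at f n (a * S)). intros r.
  apply Rle_trans with (ball_sum (fun z => a * abs_rpow p f z) n r).
  - apply isum_le. intros k _. rewrite Rmult_comm. apply abs_le_abs_rpow; assumption.
  - unfold ball_sum. rewrite isum_scal. apply Rmult_le_compat_l; [left; apply Rpower_gt_0|].
    apply isum_le_sumZ; [intros; apply rpow_ge_0 | exact HS].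
Qed.

(** * The kernel *)

Definition gap (k : nat) : R := 2 / ((2 * INR k + 1) * (2 * INR k + 3)).

Definition kern (p : R) (k : nat) : R := rpow (gap k) p.

(* [kernel p (m - n)] is [kern p] at the distance from [m] to the pair [{n, n + 1}]. *)
Definition edge_dist (j : Z) : nat := if (j <=? 0)%Z then Z.to_nat (- j) else Z.to_nat (j - 1).

Definition kernel (p : R) (j : Z) : R := kern p (edge_dist j).

Lemma gap_pos k : 0 < gap k.
Proof. unfold gap. pose proof (pos_INR k). apply Rdiv_lt_0_compat; nra. Qed.

Lemma gap_lt k l : (k < l)%nat -> gap l < gap k.
Proof.
  intros H. apply lt_INR in H. pose proof (pos_INR k). unfold gap.
  apply Rmult_lt_compat_l; [lra|]. apply Rinv_lt_contravar; nra.
Qed.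

Lemma gap_eq k X : X / (2 * INR k + 1) - X / (2 * INR (S k) + 1) = gap k * X.
Proof. rewrite S_INR. unfold gap. pose proof (pos_INR k). field. split; lra. Qed.

Lemma kern_pos p k : 0 < kern p k.
Proof. apply rpow_gt_0, gap_pos. Qed.

Lemma kern_lt p k l : 0 < p -> (k < l)%nat -> kern p l < kern p k.
Proof.
  intros Hp H. apply rpow_lt_compat; [exact Hp | split; [apply Rlt_le, gap_pos | apply gap_lt, H]].
Qed.

Lemma kern_le p k l : 0 < p -> (k <= l)%nat -> kern p l <= kern p k.
Proof.
  intros Hp H. destruct (Nat.eq_dec k l) as [->|]; [lra|]. apply Rlt_le, kern_lt; [exact Hp | lia].
Qed.

Lemma kernel_pos p j : 0 < kernel p j.
Proof. apply kern_pos. Qed.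

Lemma kern_eq p k : rpow 2 p / (rpow (2 * INR k + 1) p * rpow (2 * INR k + 3) p) = kern p k.
Proof.
  unfold kern. pose proof (pos_INR k).
  set (a := 2 * INR k + 1). set (b := 2 * INR k + 3).
  assert (E : 2 = gap k * (a * b)) by (unfold gap, a, b; field; lra).
  rewrite E at 1. rewrite !rpow_mult_distr by (apply Rlt_le; try apply gap_pos; unfold a, b; nra).
  assert (0 < rpow a p) by (apply rpow_gt_0; unfold a; lra).
  assert (0 < rpow b p) by (apply rpow_gt_0; unfold b; lra).
  field. lra.
Qed.

Lemma Cp_kern p : Cp p = Rbar_rpow (Rbar_mult 2 (sumN (kern p))) (/ p).
Proof. unfold Cp, sumN. do 2 f_equal. apply Lim_seq_ext. intros N. apply sum_n_ext, kern_eq. Qed.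

Lemma sum_n_kern_incr p M : sum_n (kern p) M <= sum_n (kern p) (S M).
Proof. rewrite sum_Sn. pose proof (kern_pos p (S M)). unfold plus; simpl. lra. Qed.

Lemma sum_n_kern_ge_0 p M : 0 <= sum_n (kern p) M.
Proof.
  induction M as [|M IH]; [rewrite sum_O; apply Rlt_le, kern_pos|].
  pose proof (sum_n_kern_incr p M). lra.
Qed.

Lemma sum_n_kern_le_sumN p M : Rbar_le (sum_n (kern p) M) (sumN (kern p)).
Proof. apply Lim_seq_incr_ge, sum_n_kern_incr. Qed.

Lemma kern_sum_ge_0 p : Rbar_le 0 (Rbar_mult 2 (sumN (kern p))).
Proof.
  unfold sumN. rewrite <- Lim_seq_scal_l.
  apply Rbar_le_trans with (2 * sum_n (kern p) O); [simpl; pose proof (sum_n_kern_ge_0 p O); lra|].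
  apply (Lim_seq_incr_ge (fun M => 2 * sum_n (kern p) M)). intros M.
  pose proof (sum_n_kern_incr p M). lra.
Qed.

Lemma isum_kernel p M : isum (kernel p) (- Z.of_nat M) (2 * M + 2) = 2 * sum_n (kern p) M.
Proof.
  assert (Hhalf : sum_n (kern p) M = isum (fun z => kern p (Z.to_nat z)) 0 (M + 1)).
  { replace (M + 1)%nat with (S M) by lia. rewrite <- sum_n_isum.
    apply sum_n_ext. intros k. f_equal. lia. }
  replace (2 * M + 2)%nat with ((M + 1) + (M + 1))%nat by lia. rewrite isum_split, Hhalf.
  (* the left half is the reflection of the right half *)
  assert (Hleft : isum (kernel p) (- Z.of_nat M) (M + 1) =
                  isum (fun z => kern p (Z.to_nat z)) 0 (M + 1)).
  { replace (- Z.of_nat M)%Z with (0 - 0 - Z.of_nat (M + 1) + 1)%Z by lia.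
    rewrite <- isum_reflect. apply isum_ext_in. intros k _. unfold kernel, edge_dist.
    destruct (Z.leb_spec (0 - (0 + Z.of_nat k)) 0); [f_equal; lia | lia]. }
  assert (Hright : isum (kernel p) (- Z.of_nat M + Z.of_nat (M + 1)) (M + 1) =
                   isum (fun z => kern p (Z.to_nat z)) 0 (M + 1)).
  { rewrite (isum_shift _ _ _ 1%Z). replace (- Z.of_nat M + Z.of_nat (M + 1) - 1)%Z with 0%Z by lia.
    apply isum_ext_in. intros k _. unfold kernel, edge_dist.
    destruct (Z.leb_spec (0 + Z.of_nat k + 1) 0); [lia | f_equal; lia]. }
  rewrite Hleft, Hright. ring.
Qed.

Lemma ball_sum_kernel_le p m N L : (Z.abs m <= Z.of_nat L)%Z ->
  ball_sum (fun n => kernel p (m - n)) 0 N <= 2 * sum_n (kern p) (N + L).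
Proof.
  intros Hm. unfold ball_sum. rewrite isum_reflect, <- isum_kernel.
  apply isum_le_superset; [intros; apply Rlt_le, kernel_pos | lia | lia].
Qed.

Lemma sumZ_kernel p m : sumZ (fun n => kernel p (m - n)) = Rbar_mult 2 (sumN (kern p)).
Proof.
  set (a := Z.to_nat (Z.abs m)).
  rewrite sumZ_ball_sum. unfold sumN. rewrite <- Lim_seq_scal_l. apply Rbar_le_antisym.
  - rewrite <- (Lim_seq_incr_n (fun N => 2 * sum_n (kern p) N) a).
    apply Lim_seq_le_loc. exists O. intros N _. apply ball_sum_kernel_le. lia.
  - rewrite <- (Lim_seq_incr_n (ball_sum _ 0) (S a)).
    apply Lim_seq_le_loc. exists O. intros N _. rewrite <- isum_kernel.
    unfold ball_sum. rewrite isum_reflect.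
    apply isum_le_superset; [intros; apply Rlt_le, kernel_pos | lia | lia].
Qed.

(** * Jumps of the maximal function *)

Definition jump (p : R) (f : Z -> R) (n : Z) : R := rpow (Rabs (maxf f (n + 1) - maxf f n)) p.

Lemma maxf_sub_le f a b r : avg_sup_attained f -> (Z.abs (a - b) <= 1)%Z ->
  maxf f a = avg f a r -> maxf f a - maxf f b <= gap r * ball_sum (fun z => Rabs (f z)) a r.
Proof.
  intros Ha Hab Hr. set (X := ball_sum (fun z => Rabs (f z)) a r).
  (* the window of radius r + 1 around b contains the window of radius r around a *)
  assert (HX : X <= ball_sum (fun z => Rabs (f z)) b (S r))
    by (apply isum_le_superset; [intros; apply Rabs_pos | lia | lia]).
  pose proof (avg_le_maxf f b (S r) Ha) as Hb. rewrite avg_ball_sum in Hb.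
  assert (0 < 2 * INR (S r) + 1) by (pose proof (pos_INR (S r)); lra).
  assert (/ (2 * INR (S r) + 1) * X <= maxf f b).
  { eapply Rle_trans; [|exact Hb].
    apply Rmult_le_compat_l; [left; apply Rinv_0_lt_compat; lra | exact HX]. }
  rewrite Hr, avg_ball_sum. fold X. rewrite <- gap_eq. unfold Rdiv. lra.
Qed.

Lemma maxf_jump_le_gap f n : avg_sup_attained f -> exists c r, (n <= c <= n + 1)%Z /\
  Rabs (maxf f (n + 1) - maxf f n) <= gap r * ball_sum (fun z => Rabs (f z)) c r.
Proof.
  intros Ha. destruct (Rle_dec (maxf f n) (maxf f (n + 1))) as [Hle|Hlt].
  - destruct (Ha (n + 1)%Z) as [r Hr]. exists (n + 1)%Z, r. split; [lia|].
    rewrite Rabs_right by lra. apply maxf_sub_le; [exact Ha | lia | apply maxf_eq_avg, Hr].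
  - destruct (Ha n) as [r Hr]. exists n, r. split; [lia|].
    rewrite Rabs_left1, Ropp_minus_distr by lra.
    apply maxf_sub_le; [exact Ha | lia | apply maxf_eq_avg, Hr].
Qed.

Definition trunc_kernel (p : R) (c : Z) (r : nat) (m : Z) : R :=
  if (Z.abs (m - c) <=? Z.of_nat r)%Z then kern p r else 0.

Lemma ball_sum_embed h c r L : (Z.abs c + Z.of_nat r <= Z.of_nat L)%Z ->
  ball_sum (fun m => if (Z.abs (m - c) <=? Z.of_nat r)%Z then h m else 0) 0 L = ball_sum h c r.
Proof.
  intros H. unfold ball_sum. set (d := Z.to_nat (c - Z.of_nat r + Z.of_nat L)).
  replace (2 * L + 1)%nat with (d + ((2 * r + 1) + (2 * L + 1 - d - (2 * r + 1))))%nat by lia.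
  rewrite (isum_split _ _ d), (isum_split _ _ (2 * r + 1)).
  rewrite (isum_zero_in _ (0 - Z.of_nat L)), (isum_zero_in _ (0 - Z.of_nat L + Z.of_nat d + _)).
  - replace (0 - Z.of_nat L + Z.of_nat d)%Z with (c - Z.of_nat r)%Z by lia.
    rewrite Rplus_0_l, Rplus_0_r. apply isum_ext_in. intros k Hk.
    destruct (Z.leb_spec (Z.abs (c - Z.of_nat r + Z.of_nat k - c)) (Z.of_nat r));
      [reflexivity | lia].
  - intros k Hk. destruct (Z.leb_spec (Z.abs (0 - Z.of_nat L + Z.of_nat d + Z.of_nat (2 * r + 1)
      + Z.of_nat k - c)) (Z.of_nat r)); [lia | reflexivity].
  - intros k Hk. destruct (Z.leb_spec (Z.abs (0 - Z.of_nat L + Z.of_nat k - c)) (Z.of_nat r));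
      [lia | reflexivity].
Qed.

Lemma jump_le_trunc_kernel p f n : 0 < p <= 1 -> avg_sup_attained f ->
  exists c r, (n <= c <= n + 1)%Z /\ forall L, (Z.abs c + Z.of_nat r <= Z.of_nat L)%Z ->
    jump p f n <= ball_sum (fun m => trunc_kernel p c r m * abs_rpow p f m) 0 L.
Proof.
  intros Hp Ha. destruct (maxf_jump_le_gap f n Ha) as [c [r [Hc Hgap]]].
  exists c, r. split; [exact Hc|]. intros L HL.
  replace (ball_sum _ 0 L) with (ball_sum (fun m => kern p r * abs_rpow p f m) c r).
  2: { rewrite <- (ball_sum_embed _ c r L HL). apply isum_ext. intros m.
       unfold trunc_kernel. destruct (_ <=? _)%Z; ring. }
  unfold jump.
  eapply Rle_trans; [apply rpow_le_compat; [lra | split; [apply Rabs_pos | exact Hgap]]|].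
  rewrite rpow_mult_distr by (apply Rlt_le, gap_pos || (apply isum_ge_0; intros; apply Rabs_pos)).
  unfold ball_sum. rewrite isum_scal. apply Rmult_le_compat_l; [apply rpow_ge_0|].
  apply isum_rpow_le; [exact Hp | intros; apply Rabs_pos].
Qed.

Lemma trunc_kernel_le p n c r m : 0 < p -> (n <= c <= n + 1)%Z ->
  trunc_kernel p c r m <= kernel p (m - n).
Proof.
  intros Hp Hc. unfold trunc_kernel, kernel.
  destruct (Z.leb_spec (Z.abs (m - c)) (Z.of_nat r)); [|apply Rlt_le, kern_pos].
  apply kern_le; [exact Hp|]. unfold edge_dist. destruct (Z.leb_spec (m - n) 0); lia.
Qed.

Lemma trunc_kernel_lt p n c r : 0 < p -> (n <= c <= n + 1)%Z ->
  exists ms, forall m, m <> ms -> trunc_kernel p c r m < kernel p (m - n).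
Proof.
  intros Hp Hc. exists (if (c =? n)%Z then n - Z.of_nat r else n + 1 + Z.of_nat r)%Z.
  intros m Hm. unfold trunc_kernel, kernel.
  destruct (Z.leb_spec (Z.abs (m - c)) (Z.of_nat r)); [|apply kern_pos].
  apply kern_lt; [exact Hp|]. unfold edge_dist.
  destruct (Z.eqb_spec c n), (Z.leb_spec (m - n) 0); lia.
Qed.

Definition kernel_bound (p : R) (f : Z -> R) (n : Z) (delta : R) : Prop :=
  eventually (fun L =>
    jump p f n + delta <= ball_sum (fun m => kernel p (m - n) * abs_rpow p f m) 0 L).

Lemma kernel_bound_0 p f n : 0 < p <= 1 -> avg_sup_attained f -> kernel_bound p f n 0.
Proof.
  intros Hp Ha. destruct (jump_le_trunc_kernel p f n Hp Ha) as [c [r [Hc Hj]]].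
  exists (Z.to_nat (Z.abs c + Z.of_nat r)). intros L HL. rewrite Rplus_0_r.
  eapply Rle_trans; [apply (Hj L); lia|]. apply isum_le. intros k _.
  apply Rmult_le_compat_r; [apply rpow_ge_0 | apply trunc_kernel_le; [lra | exact Hc]].
Qed.

Lemma kernel_bound_pos p f m1 m2 : 0 < p <= 1 -> avg_sup_attained f ->
  m1 <> m2 -> f m1 <> 0 -> f m2 <> 0 -> exists delta, 0 < delta /\ kernel_bound p f 0 delta.
Proof.
  intros Hp Ha H12 H1 H2. destruct (jump_le_trunc_kernel p f 0 Hp Ha) as [c [r [Hc Hj]]].
  destruct (trunc_kernel_lt p 0 c r ltac:(lra) Hc) as [ms Hms].
  assert (Hmi : exists mi, mi <> ms /\ f mi <> 0 /\ (Z.abs mi <= Z.abs m1 + Z.abs m2)%Z).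
  { destruct (Z.eq_dec m1 ms) as [->|]; [exists m2 | exists m1]; repeat split; auto; lia. }
  destruct Hmi as [mi [Hmi_ms [Hmi_nz Hmi_abs]]].
  set (G := fun m => (kernel p (m - 0) - trunc_kernel p c r m) * abs_rpow p f m).
  assert (HG : forall m, 0 <= G m).
  { intros m. pose proof (trunc_kernel_le p 0 c r m ltac:(lra) Hc).
    apply Rmult_le_pos; [lra | apply rpow_ge_0]. }
  set (L1 := Z.to_nat (Z.abs c + Z.of_nat r + Z.abs m1 + Z.abs m2)).
  exists (ball_sum G 0 L1). split.
  - unfold ball_sum.
    rewrite <- (isum_zero_in (fun _ => 0) (0 - Z.of_nat L1) (2 * L1 + 1)) by reflexivity.
    apply isum_lt; [intros; apply HG|]. exists (Z.to_nat (mi + Z.of_nat L1)). split; [lia|].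
    replace (0 - Z.of_nat L1 + Z.of_nat (Z.to_nat (mi + Z.of_nat L1)))%Z with mi by lia.
    pose proof (Hms mi Hmi_ms). unfold G.
    apply Rmult_lt_0_compat; [lra | apply rpow_gt_0, Rabs_pos_lt, Hmi_nz].
  - exists L1. intros L HL.
    assert (ball_sum G 0 L1 <= ball_sum G 0 L) by (apply isum_le_superset; [exact HG | lia | lia]).
    assert (jump p f 0 <= ball_sum (fun m => trunc_kernel p c r m * abs_rpow p f m) 0 L)
      by (apply Hj; lia).
    assert (ball_sum (fun m => kernel p (m - 0) * abs_rpow p f m) 0 L =
            ball_sum G 0 L + ball_sum (fun m => trunc_kernel p c r m * abs_rpow p f m) 0 L).
    { unfold ball_sum. rewrite <- isum_plus. apply isum_ext. intros m. unfold G. ring. }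
    lra.
Qed.

Lemma eventually_forall_lt (P : nat -> nat -> Prop) len :
  (forall k, (k < len)%nat -> eventually (P k)) ->
  eventually (fun L => forall k, (k < len)%nat -> P k L).
Proof.
  induction len as [|len IH]; intros H; [exists O; intros; lia|].
  apply (filter_imp (fun L => (forall k, (k < len)%nat -> P k L) /\ P len L)).
  - intros L [HL Hlen] k Hk. destruct (Nat.eq_dec k len) as [->|]; [exact Hlen | apply HL; lia].
  - apply filter_and; [apply IH; intros k Hk; apply H; lia | apply H; lia].
Qed.

Lemma ball_sum_jump_le p f delta : 0 < p <= 1 -> in_lp p f -> kernel_bound p f 0 delta ->
  forall N, exists M, ball_sum (jump p f) 0 N + delta <= 2 * sum_n (kern p) M * real (lp_sum p f).
Proof.
  intros Hp Hf H0 N. pose proof (in_lp_avg_sup_attained p f Hp Hf) as Ha.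
  set (slack := fun n : Z => if (n =? 0)%Z then delta else 0).
  destruct (eventually_forall_lt (fun k L =>
      jump p f (0 - Z.of_nat N + Z.of_nat k)%Z + slack (0 - Z.of_nat N + Z.of_nat k)%Z <=
      ball_sum (fun m => kernel p (m - (0 - Z.of_nat N + Z.of_nat k)) * abs_rpow p f m) 0 L)
      (2 * N + 1)) as [L HL].
  { intros k _. unfold slack. destruct (Z.eqb_spec (0 - Z.of_nat N + Z.of_nat k) 0) as [->|].
    - exact H0.
    - apply kernel_bound_0; assumption. }
  exists (N + L)%nat.
  assert (Hslack : ball_sum slack 0 N = delta).
  { unfold ball_sum. rewrite (isum_single slack _ _ 0%Z); [unfold slack; reflexivity | | lia].
    intros z Hz. unfold slack. destruct (Z.eqb_spec z 0); [contradiction | reflexivity]. }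
  rewrite <- Hslack. unfold ball_sum at 1 2. rewrite <- isum_plus.
  apply Rle_trans with (isum (fun n => ball_sum (fun m => kernel p (m - n) * abs_rpow p f m) 0 L)
                          (0 - Z.of_nat N) (2 * N + 1)).
  { apply isum_le. intros k Hk. apply (HL L (Nat.le_refl L) k Hk). }
  (* exchange the two summations; each f(m) then carries the total mass of the kernel *)
  unfold ball_sum. rewrite isum_swap.
  apply Rle_trans with (isum (fun m => 2 * sum_n (kern p) (N + L) * abs_rpow p f m)
                          (0 - Z.of_nat L) (2 * L + 1)).
  - apply isum_le. intros k Hk. set (m := (0 - Z.of_nat L + Z.of_nat k)%Z).
    rewrite (isum_ext _ (fun n => abs_rpow p f m * kernel p (m - n))) by (intros; ring).
    rewrite isum_scal, Rmult_comm. apply Rmult_le_compat_r; [apply rpow_ge_0|].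
    apply ball_sum_kernel_le. lia.
  - rewrite isum_scal. apply Rmult_le_compat_l.
    + pose proof (sum_n_kern_ge_0 p (N + L)). lra.
    + apply isum_le_sumZ; [intros; apply rpow_ge_0 | apply in_lp_sumZ, Hf].
Qed.

Lemma lp_sum_ge_0 p f : in_lp p f -> 0 <= real (lp_sum p f).
Proof.
  intros Hf. apply Rle_trans with (abs_rpow p f 0); [apply rpow_ge_0|].
  apply le_sumZ; [intros; apply rpow_ge_0 | apply in_lp_sumZ, Hf].
Qed.

Lemma sumZ_jump_le p f : 0 < p <= 1 -> in_lp p f ->
  Rbar_le (sumZ (jump p f)) (Rbar_mult (Rbar_mult 2 (sumN (kern p))) (lp_sum p f)).
Proof.
  intros Hp Hf. pose proof (in_lp_avg_sup_attained p f Hp Hf) as Ha.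
  pose proof (lp_sum_ge_0 p f Hf) as HS0. set (S := real (lp_sum p f)) in *.
  rewrite <- Hf. fold S. unfold sumN. rewrite <- Lim_seq_scal_l, <- Lim_seq_scal_r, sumZ_ball_sum.
  apply Lim_seq_le_ub. intros N.
  destruct (ball_sum_jump_le p f 0 Hp Hf (kernel_bound_0 p f 0 Hp Ha) N) as [M HM].
  fold S in HM.
  apply Rbar_le_trans with (2 * sum_n (kern p) M * S); [simpl; lra|].
  apply (Lim_seq_incr_ge (fun M => 2 * sum_n (kern p) M * S)). intros k.
  apply Rmult_le_compat_r; [exact HS0|]. pose proof (sum_n_kern_incr p k). lra.
Qed.

Lemma sumZ_jump_lt p f G m1 m2 : 0 < p <= 1 -> in_lp p f -> sumN (kern p) = Finite G ->
  m1 <> m2 -> f m1 <> 0 -> f m2 <> 0 ->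
  Rbar_lt (sumZ (jump p f)) (Rbar_mult (Rbar_mult 2 (sumN (kern p))) (lp_sum p f)).
Proof.
  intros Hp Hf HG H12 H1 H2. pose proof (in_lp_avg_sup_attained p f Hp Hf) as Ha.
  destruct (kernel_bound_pos p f m1 m2 Hp Ha H12 H1 H2) as [delta [Hd Hbound]].
  pose proof (lp_sum_ge_0 p f Hf) as HS0. set (S := real (lp_sum p f)) in *.
  assert (Hle : Rbar_le (sumZ (jump p f)) (2 * G * S - delta)).
  { rewrite sumZ_ball_sum. apply Lim_seq_le_ub. intros N.
    destruct (ball_sum_jump_le p f delta Hp Hf Hbound N) as [M HM]. fold S in HM.
    pose proof (sum_n_kern_le_sumN p M) as HMG. rewrite HG in HMG. simpl in HMG |- *. nra. }
  rewrite HG, <- Hf. fold S. simpl.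
  eapply Rbar_le_lt_trans; [exact Hle|]. simpl. lra.
Qed.

(** * Delta functions *)

Section Delta.

Variables (p : R) (f : Z -> R) (m : Z) (c : R).
Hypothesis Hf : forall n, f n = if (n =? m)%Z then c else 0.

Lemma lp_sum_delta : lp_sum p f = Finite (rpow (Rabs c) p).
Proof.
  unfold lp_sum. rewrite sumZ_ball_sum, <- (Lim_seq_const (rpow (Rabs c) p)).
  apply Lim_seq_ext_loc. exists (Z.to_nat (Z.abs m)). intros N HN.
  unfold ball_sum. rewrite (isum_single _ _ _ m); [rewrite Hf, Z.eqb_refl; reflexivity | | lia].
  intros z Hz. rewrite Hf. destruct (Z.eqb_spec z m); [contradiction|].
  rewrite Rabs_R0. apply rpow_nonpos; lra.
Qed.

Lemma avg_delta n r :
  avg f n r = if (Z.abs (n - m) <=? Z.of_nat r)%Z then Rabs c / (2 * INR r + 1) else 0.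
Proof.
  rewrite avg_ball_sum. unfold ball_sum. destruct (Z.leb_spec (Z.abs (n - m)) (Z.of_nat r)).
  - rewrite (isum_single _ _ _ m); [rewrite Hf, Z.eqb_refl; unfold Rdiv; ring | | lia].
    intros z Hz. rewrite Hf. destruct (Z.eqb_spec z m); [contradiction | apply Rabs_R0].
  - rewrite isum_zero_in; [ring|]. intros k Hk. rewrite Hf.
    destruct (Z.eqb_spec (n - Z.of_nat r + Z.of_nat k) m); [lia | apply Rabs_R0].
Qed.

Lemma maxf_delta n : maxf f n = Rabs c / (2 * INR (Z.to_nat (Z.abs (n - m))) + 1).
Proof.
  set (d := Z.to_nat (Z.abs (n - m))).
  assert (Hd : (Z.abs (n - m) <=? Z.of_nat d)%Z = true) by (apply Z.leb_le; lia).
  rewrite (maxf_eq_avg f n d); [rewrite avg_delta, Hd; reflexivity|].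
  intros r. rewrite !avg_delta, Hd. pose proof (Rabs_pos c). pose proof (pos_INR d).
  destruct (Z.leb_spec (Z.abs (n - m)) (Z.of_nat r)).
  - unfold Rdiv. apply Rmult_le_compat_l; [lra|]. apply Rinv_le_contravar; [lra|].
    assert (INR d <= INR r) by (apply le_INR; lia). lra.
  - apply Rdiv_le_0_compat; lra.
Qed.

Lemma jump_delta n : jump p f n = rpow (Rabs c) p * kernel p (m - n).
Proof.
  unfold jump, kernel, kern. rewrite !maxf_delta, <- rpow_mult_distr by
    (apply Rabs_pos || apply Rlt_le, gap_pos).
  f_equal. unfold edge_dist. pose proof (Rabs_pos c).
  (* consecutive values of Mf differ by gap k * |c|, where k is the distance to the edge *)
  destruct (Z.leb_spec (m - n) 0).
  - replace (Z.to_nat (Z.abs (n + 1 - m))) with (S (Z.to_nat (- (m - n)))) by lia.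
    replace (Z.to_nat (Z.abs (n - m))) with (Z.to_nat (- (m - n))) by lia.
    pose proof (gap_eq (Z.to_nat (- (m - n))) (Rabs c)).
    pose proof (gap_pos (Z.to_nat (- (m - n)))).
    rewrite Rabs_left1 by nra. lra.
  - replace (Z.to_nat (Z.abs (n + 1 - m))) with (Z.to_nat (m - n - 1)) by lia.
    replace (Z.to_nat (Z.abs (n - m))) with (S (Z.to_nat (m - n - 1))) by lia.
    pose proof (gap_eq (Z.to_nat (m - n - 1)) (Rabs c)).
    pose proof (gap_pos (Z.to_nat (m - n - 1))).
    rewrite Rabs_right by nra. lra.
Qed.

Lemma sumZ_jump_delta :
  sumZ (jump p f) = Rbar_mult (Rbar_mult 2 (sumN (kern p))) (lp_sum p f).
Proof.
  rewrite lp_sum_delta, Rbar_mult_comm, <- (sumZ_kernel p m), <- sumZ_scal.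
  apply sumZ_ext, jump_delta.
Qed.

Lemma in_lp_delta : in_lp p f.
Proof. unfold in_lp. rewrite lp_sum_delta. reflexivity. Qed.

Lemma lp_norm_delta : 0 < p -> lp_norm p f = Finite (Rabs c).
Proof.
  intros Hp. unfold lp_norm. rewrite lp_sum_delta. simpl.
  rewrite rpow_rpow_inv; [reflexivity | exact Hp | apply Rabs_pos].
Qed.

End Delta.

Lemma Var_p_maxf p f : Var_p p (maxf f) = Rbar_rpow (sumZ (jump p f)) (/ p).
Proof. reflexivity. Qed.

Lemma Cp_mult_lp_norm p f : 0 < p -> Rbar_mult (Cp p) (lp_norm p f) =
  Rbar_rpow (Rbar_mult (Rbar_mult 2 (sumN (kern p))) (lp_sum p f)) (/ p).
Proof.
  intros Hp. rewrite Cp_kern. unfold lp_norm. symmetry. apply Rbar_rpow_mult.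
  - apply Rinv_0_lt_compat, Hp.
  - apply kern_sum_ge_0.
  - apply sumZ_ge_0. intros; apply rpow_ge_0.
Qed.

Lemma Var_p_delta p f : 0 < p -> is_delta f -> Var_p p (maxf f) = Rbar_mult (Cp p) (lp_norm p f).
Proof.
  intros Hp [m [c [_ Hf]]].
  rewrite Var_p_maxf, Cp_mult_lp_norm, (sumZ_jump_delta p f m c Hf) by exact Hp. reflexivity.
Qed.

(** * Summability of the kernel for p > 1/2 *)

Lemma ln_ge_1_sub_inv z : 0 < z -> 1 - / z <= ln z.
Proof.
  intros Hz. pose proof (exp_ineq1_le (- ln z)) as H.
  rewrite exp_Ropp, exp_ln in H by exact Hz. lra.
Qed.

(* mean value inequality for x |-> x^(-t), from exp u >= 1 + u and ln (1 + 1/x) >= 1/(x + 1) *)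
Lemma Rpower_sub_ge x t : 0 < x -> 0 < t ->
  t * Rpower (x + 1) (- 1 - t) <= Rpower x (- t) - Rpower (x + 1) (- t).
Proof.
  intros Hx Ht. unfold Rpower. set (A := ln x). set (B := ln (x + 1)).
  assert (HB : exp ((- 1 - t) * B) = exp (- t * B) * / (x + 1)).
  { replace ((- 1 - t) * B) with (- t * B + - B) by ring.
    rewrite exp_plus, exp_Ropp. unfold B. rewrite exp_ln by lra. reflexivity. }
  assert (HA : exp (- t * A) = exp (- t * B) * exp (t * (B - A)))
    by (rewrite <- exp_plus; f_equal; ring).
  assert (HBA : / (x + 1) <= B - A).
  { unfold A, B. rewrite <- ln_div by lra.
    pose proof (ln_ge_1_sub_inv ((x + 1) / x) ltac:(apply Rdiv_lt_0_compat; lra)) as H.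
    replace (/ ((x + 1) / x)) with (1 - / (x + 1)) in H by (field; lra). lra. }
  pose proof (exp_ineq1_le (t * (B - A))). pose proof (exp_pos (- t * B)).
  rewrite HB, HA.
  assert (t * / (x + 1) <= t * (B - A)) by (apply Rmult_le_compat_l; lra).
  assert (exp (- t * B) * (t * / (x + 1)) <= exp (- t * B) * (exp (t * (B - A)) - 1))
    by (apply Rmult_le_compat_l; lra).
  nra.
Qed.

Lemma sum_n_Rpower_le s M : 1 < s ->
  sum_n (fun k => Rpower (INR k + 1) (- s)) M <=
  1 + 1 / (s - 1) * (1 - Rpower (INR M + 1) (- (s - 1))).
Proof.
  intros Hs. assert (Hinv : (s - 1) * (1 / (s - 1)) = 1) by (field; lra).
  assert (Hpos : 0 < 1 / (s - 1)) by (apply Rdiv_lt_0_compat; lra).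
  induction M as [|M IH].
  - rewrite sum_O. simpl. rewrite Rplus_0_l. unfold Rpower. rewrite ln_1, !Rmult_0_r, exp_0. lra.
  - rewrite sum_Sn, S_INR. unfold plus; simpl.
    pose proof (pos_INR M).
    pose proof (Rpower_sub_ge (INR M + 1) (s - 1) ltac:(lra) ltac:(lra)) as Hstep.
    replace (- 1 - (s - 1)) with (- s) in Hstep by ring.
    assert (Rpower (INR M + 1 + 1) (- s) <= 1 / (s - 1) *
              (Rpower (INR M + 1) (- (s - 1)) - Rpower (INR M + 1 + 1) (- (s - 1)))).
    { apply Rmult_le_reg_l with (s - 1); [lra|]. rewrite <- Rmult_assoc, Hinv. lra. }
    lra.
Qed.

Lemma kern_le_Rpower p k : 0 < p -> kern p k <= Rpower 2 p * Rpower (INR k + 1) (- (2 * p)).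
Proof.
  intros Hp. unfold kern. pose proof (pos_INR k).
  apply Rle_trans with (rpow (2 * / ((INR k + 1) * (INR k + 1))) p).
  - apply rpow_le_compat; [exact Hp|]. split; [apply Rlt_le, gap_pos|].
    unfold gap, Rdiv. apply Rmult_le_compat_l; [lra|]. apply Rinv_le_contravar; nra.
  - rewrite rpow_mult_distr, !rpow_Rpower by (try apply Rlt_le; try apply Rinv_0_lt_compat; nra).
    apply Rmult_le_compat_l; [apply Rlt_le, Rpower_gt_0|]. right. unfold Rpower. f_equal.
    rewrite ln_Rinv, ln_mult by nra. ring.
Qed.

Lemma sum_n_le_compat (u v : nat -> R) M : (forall k, u k <= v k) -> sum_n u M <= sum_n v M.
Proof.
  intros H. induction M as [|M IH]; [rewrite !sum_O; apply H|].
  rewrite !sum_Sn. unfold plus; simpl. pose proof (H (S M)). lra.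
Qed.

Lemma sumN_kern_finite p : 1 / 2 < p -> exists G, sumN (kern p) = Finite G.
Proof.
  intros Hp. set (B := Rpower 2 p * (1 + 1 / (2 * p - 1))).
  assert (Hub : Rbar_le (sumN (kern p)) B).
  { apply Lim_seq_le_ub. intros M. simpl.
    apply Rle_trans with (sum_n (fun k => Rpower 2 p * Rpower (INR k + 1) (- (2 * p))) M).
    - apply sum_n_le_compat. intros k. apply kern_le_Rpower. lra.
    - rewrite (sum_n_mult_l (K := R_Ring)). unfold mult; simpl.
      apply Rmult_le_compat_l; [apply Rlt_le, Rpower_gt_0|].
      eapply Rle_trans; [apply sum_n_Rpower_le; lra|].
      assert (0 < 1 / (2 * p - 1)) by (apply Rdiv_lt_0_compat; lra).
      pose proof (Rpower_gt_0 (INR M + 1) (- (2 * p - 1))). nra. }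
  pose proof (sum_n_kern_le_sumN p O) as Hlb.
  destruct (sumN (kern p)) as [G| |]; simpl in Hub, Hlb; try contradiction. exists G. reflexivity.
Qed.

(** * The equality case *)

Lemma not_delta_two_points f n0 : f n0 <> 0 -> ~ is_delta f -> exists m, m <> n0 /\ f m <> 0.
Proof.
  intros Hn0 Hd. apply NNPP. intros Hno. apply Hd. exists n0, (f n0). split; [exact Hn0|].
  intros n. destruct (Z.eqb_spec n n0) as [->|Hn]; [reflexivity|].
  apply NNPP. intros Hfn. apply Hno. exists n. split; assumption.
Qed.

Lemma sumZ_jump_lt_of_not_delta p f : 1 / 2 < p <= 1 -> in_lp p f -> (exists n, f n <> 0) ->
  ~ is_delta f ->
  Rbar_lt (sumZ (jump p f)) (Rbar_mult (Rbar_mult 2 (sumN (kern p))) (lp_sum p f)).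
Proof.
  intros Hp Hf [n0 Hn0] Hd. destruct (not_delta_two_points f n0 Hn0 Hd) as [m [Hm Hfm]].
  destruct (sumN_kern_finite p ltac:(lra)) as [G HG].
  apply (sumZ_jump_lt p f G m n0); auto; lra.
Qed.

Theorem theorem5p1 (p : R) (hp0 : 0 < p) (hp1 : p <= 1) :
  (forall f : Z -> R, in_lp p f ->
     Rbar_le (Var_p p (maxf f)) (Rbar_mult (Cp p) (lp_norm p f)))
  /\
  (forall C : R, Rbar_lt (Finite C) (Cp p) ->
     exists f : Z -> R, in_lp p f /\
       Rbar_lt (Rbar_mult (Finite C) (lp_norm p f)) (Var_p p (maxf f)))
  /\
  (1 / 2 < p ->
   forall f : Z -> R, in_lp p f -> (exists n, f n <> 0) ->
     (Var_p p (maxf f) = Rbar_mult (Cp p) (lp_norm p f) <-> is_delta f)).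
Proof.
  assert (Hq : 0 < / p) by (apply Rinv_0_lt_compat, hp0).
  split; [|split].
  - intros f Hf. rewrite Var_p_maxf, Cp_mult_lp_norm by exact hp0.
    apply Rbar_rpow_le; [exact Hq | apply sumZ_ge_0; intros; apply rpow_ge_0 |].
    apply sumZ_jump_le; [lra | exact Hf].
  - intros C HC. set (f := fun n : Z => if (n =? 0)%Z then 1 else 0).
    assert (Hdelta : is_delta f) by (exists 0%Z, 1; split; [lra | reflexivity]).
    exists f. split; [apply (in_lp_delta p f 0 1); reflexivity|].
    rewrite Var_p_delta, (lp_norm_delta p f 0 1), Rabs_R1, !Rbar_mult_1_r
      by (reflexivity || assumption).
    exact HC.
  - intros Hp2 f Hf Hnz. split; [|apply Var_p_delta; exact hp0].
    intros Heq. apply NNPP. intros Hnd. revert Heq.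
    rewrite Var_p_maxf, Cp_mult_lp_norm by exact hp0. apply Rbar_lt_not_eq, Rbar_rpow_lt.
    + exact Hq.
    + apply sumZ_ge_0. intros; apply rpow_ge_0.
    + apply sumZ_jump_lt_of_not_delta; [lra | exact Hf | exact Hnz | exact Hnd].
Qed.
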